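(* Let $A\in\mathbb{C}^{m\times m}$ be diagonalizable with spectral decomposition $A=\sum_j a_jP_j$ (distinct eigenvalues, spectral projections $P_iP_j=\delta_{ij}P_i$, $\sum_jP_j=I_m$), and suppose $e^A$ has a period $k$, i.e. $k$ is the smallest positive integer with $(e^A)^k=I_m$. Let $n$ be a positive integer, written $n=kn_q+r$ with quotient $n_q$ and remainder $0\le r<k$. Then, for $B\in\mathbb{C}^{m\times m}$ with $A+B$ diagonalizable, as $B\to0$, $$\left[e^{A+B}\right]^n=e^{\,rA+r\cdot\mathrm{sspc}_A(B)+n\cdot\mathrm{ssp}_A(B)}+O(\|B\|^2).$$
   Context: $\|\cdot\|$ is the Frobenius norm. $\mathrm{ssp}_A(B):=\sum_jP_jBP_j$ and $\mathrm{sspc}_A(B):=\sum_{j\neq k}P_jBP_k$, where $P_j$ are the spectral projections of $A$. ''$=\ldots+O(\|B\|^2)$'' means there exist $c,\delta>0$ (depending on $A$ and $n$) such that the norm of the difference is at most $c\|B\|^2$ whenever $\|B\|\le\delta$ and $A+B$ is diagonalizable. *)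

(* complex numbers are R[i] (mathcomp-real-closed) over an
   arbitrary R : realType (MathComp-Analysis), so that C = R[i] is complete. *)
From HB Require Import structures.
From mathcomp Require Import all_boot all_order all_algebra.
From mathcomp Require Import boolp classical_sets reals.
From mathcomp Require Import complex.
Set Implicit Arguments. Unset Strict Implicit. Unset Printing Implicit Defensive.
Import Order.TTheory GRing.Theory Num.Theory.
Local Open Scope ring_scope.

Section Defs.
Variable R : realType.
Variable m : nat.
Local Notation C := (R[i]).
Local Notation M := ('M[C]_m).

Definition frob (A : M) : R :=
  Num.sqrt (\sum_(i < m) \sum_(j < m)
              (complex.Re (A i j) ^+ 2 + complex.Im (A i j) ^+ 2)).

Definition expm_partial (A : M) (N : nat) : M :=
  \sum_(k < N) (k`!%:R)^-1 *: A ^+ k.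

Definition is_expm (A E : M) : Prop :=
  forall eps : R, 0 < eps ->
    exists N : nat, forall N', (N <= N')%N -> frob (E - expm_partial A N') < eps.

(* Matrix exponential: the limit of the exponential series
   (which always exists; chosen classically). *)
Definition expm (A : M) : M := xget 0 (is_expm A).

Definition ssp (s : nat) (P : 'I_s -> M) (B : M) : M :=
  \sum_(j < s) P j * B * P j.

Definition sspc (s : nat) (P : 'I_s -> M) (B : M) : M :=
  \sum_(j < s) \sum_(k < s | k != j) P j * B * P k.

End Defs.

(* The matrix T = sylvester B, with entries
   (a_l - a_j)^-1 P_j B P_l off the diagonal blocks, solves [A, T] = - sspc_A(B).
   Hence conjugation by S = 1 + T, invertible for small B, maps
   Y r n = r A + r sspc_A(B) + n ssp_A(B) to Z r n = r A + n ssp_A(B) up to O(|B|^2),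
   for all scalars r and n.  Now Y 1 1 = A + B, and since ssp_A(B) commutes with A
   and e^(kA) = 1, (e^(Z 1 1))^n = e^(n A + n ssp_A(B)) = e^(Z r n) for r = n mod k.
   The exponential and the n-th power are locally Lipschitz, so
   (e^(A+B))^n - e^(Y r n) = S ((e^(C 1 1))^n - (e^(Z 1 1))^n + e^(Z r n) - e^(C r n)) S^-1,
   with C = S^-1 Y S, is O(|B|^2).
   Norms are entrywise l1 norms (submultiplicative and equivalent to the Frobenius
   norm), and the exponential is handled through its defining series. *)

From HB Require Import structures.
From mathcomp Require Import all_boot all_order all_algebra.
From mathcomp Require Import boolp classical_sets reals complex.
From mathcomp Require Import topology normedtype sequences exp.
From mathcomp Require Import ring lra.
Import Order.TTheory GRing.Theory Num.Theory.
Import numFieldNormedType.Exports.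
Local Open Scope ring_scope.
Set Implicit Arguments. Unset Strict Implicit. Unset Printing Implicit Defensive.

Lemma ltr_mul_div_succ (R : realFieldType) (c e : R) :
  0 <= c -> 0 < e -> c * (e / (c + 1)) < e.
Proof. by move=> c0 e0; rewrite mulrA ltr_pdivrMr; nra. Qed.

Lemma ler_addgt0_scaled (R : realFieldType) (c x y : R) :
  0 <= c -> (forall e, 0 < e -> x <= y + c * e) -> x <= y.
Proof.
move=> c0 H; apply/ler_addgt0Pr => e e0.
apply: le_trans (H _ (divr_gt0 e0 (ltr_wpDl c0 ltr01))) _.
by rewrite lerD2l ltW // ltr_mul_div_succ.
Qed.

Lemma ler_mul_norml (R : realDomainType) (c x y : R) :
  0 <= x -> x <= y -> c * x <= `|c| * y.
Proof.
move=> x0 xy; apply: le_trans (_ : _ <= `|c| * x) _.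
  by apply: ler_wpM2r => //; exact: ler_norm.
by apply: ler_wpM2l => //; exact: normr_ge0.
Qed.

Lemma intertwineX (T : pzRingType) (x y s : T) k :
  x * s = s * y -> x ^+ k * s = s * y ^+ k.
Proof.
move=> xs; elim: k => [|k IH]; first by rewrite !expr0 mul1r mulr1.
by rewrite exprS -mulrA IH mulrA xs -mulrA -exprS.
Qed.

Lemma conjX (T : pzRingType) (s t x : T) n :
  s * t = 1 -> t * s = 1 -> (t * x * s) ^+ n = t * x ^+ n * s.
Proof.
move=> st ts; have xs : x * s = s * (t * x * s) by rewrite !mulrA st mul1r.
by rewrite -[RHS]mulrA (intertwineX n xs) mulrA ts mul1r.
Qed.

Lemma conj_exprB (T : pzRingType) (s t x y u v : T) n :
  s * t = 1 -> t * s = 1 -> u ^+ n = v ->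
  s * ((x ^+ n - u ^+ n) + (v - y)) * t = (s * x * t) ^+ n - s * y * t.
Proof.
by move=> st ts <-; rewrite addrA subrK mulrBr mulrBl (conjX _ _ ts st).
Qed.

Section RealSeries.
Variable R : realType.

Lemma cauchy_seq_cvg (u : nat -> R) :
  (forall eps : R, 0 < eps -> exists N, forall p q,
     (N <= p)%N -> (N <= q)%N -> `|u p - u q| < eps) ->
  exists l : R, forall eps : R, 0 < eps ->
    exists N, forall p, (N <= p)%N -> `|l - u p| < eps.
Proof.
move=> u_cauchy.
have u_cvg : cvgn u.
  apply/cauchy_cvgP/cauchy_ballP => e e0; have [N HN] := u_cauchy e e0.
  rewrite near_simpl.
  exists ([set p | (N <= p)%N]%classic, [set q | (N <= q)%N]%classic).
    by split; exists N.
  by move=> [p q] [/= hp hq]; rewrite /ball /= distrC; apply: HN.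
exists (limn u) => eps eps0.
by move/cvgrPdist_lt: u_cvg => /(_ eps eps0) [N _ HN]; exists N.
Qed.

Lemma series_exp_coeff_le (x : R) N : 0 <= x -> series (exp_coeff x) N <= expR x.
Proof.
move=> x0; apply: nondecreasing_cvgn_le; last exact: is_cvg_series_exp_coeff.
by apply: (@nondecreasing_series R _ xpredT 0%N) => k _ _; exact: exp_coeff_ge0.
Qed.

Lemma series_exp_coeff_ge0 (x : R) N : 0 <= x -> 0 <= series (exp_coeff x) N.
Proof. by move=> x0; apply: sumr_ge0 => k _; exact: exp_coeff_ge0. Qed.

Lemma series_exp_coeff_cvg (x eps : R) : 0 < eps ->
  exists N0, forall N, (N0 <= N)%N -> expR x - series (exp_coeff x) N < eps.
Proof.
move=> eps0; move/cvgrPdist_lt: (is_cvg_series_exp_coeff x) => /(_ eps eps0) [N0 _ HN].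
by exists N0 => N /HN; apply: le_lt_trans; apply: ler_norm.
Qed.

End RealSeries.

Section ComplexNorm.
Variable R : realType.
Local Notation normc := (@Normc.normc R).
Implicit Types x y : R[i].

Lemma normc_ge0 x : 0 <= normc x.
Proof. by case: x => a b; apply: sqrtr_ge0. Qed.

Lemma normc_sqr x : normc x ^+ 2 = complex.Re x ^+ 2 + complex.Im x ^+ 2.
Proof. by case: x => a b /=; rewrite sqr_sqrtr // addr_ge0 ?sqr_ge0. Qed.

Lemma normc_nat k : normc k%:R = k%:R.
Proof. by rewrite -[k%:R]/((1 : R[i]) *+ k) normcMn Normc.normc1. Qed.

Lemma Re_le_normc x : `|complex.Re x| <= normc x.
Proof.
rewrite -sqrtr_sqr -[normc x]ger0_norm ?normc_ge0 // -sqrtr_sqr normc_sqr.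
by rewrite ler_sqrt ?addr_ge0 ?sqr_ge0 // lerDl sqr_ge0.
Qed.

Lemma Im_le_normc x : `|complex.Im x| <= normc x.
Proof.
rewrite -sqrtr_sqr -[normc x]ger0_norm ?normc_ge0 // -sqrtr_sqr normc_sqr.
by rewrite ler_sqrt ?addr_ge0 ?sqr_ge0 // lerDr sqr_ge0.
Qed.

Lemma normc_le_ReIm x : normc x <= `|complex.Re x| + `|complex.Im x|.
Proof.
have h : normc x ^+ 2 <= (`|complex.Re x| + `|complex.Im x|) ^+ 2.
  rewrite normc_sqr sqrrD !real_normK ?num_real // -addrA lerD2l lerDr.
  by rewrite mulrn_wge0 // mulr_ge0.
by rewrite -(@ler_pXn2r _ 2) // ?nnegrE ?normc_ge0 ?addr_ge0.
Qed.

Lemma normc_sum (I : Type) (r : seq I) (P : pred I) (F : I -> R[i]) :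
  normc (\sum_(i <- r | P i) F i) <= \sum_(i <- r | P i) normc (F i).
Proof.
elim/big_rec2: _ => [|i y1 y2 _ IH]; first by rewrite Normc.normc0.
by apply: le_trans (le_normcD _ _) _; rewrite lerD2l.
Qed.

Lemma complex_cauchy_cvg (u : nat -> R[i]) :
  (forall eps : R, 0 < eps -> exists N, forall p q,
     (N <= p)%N -> (N <= q)%N -> normc (u p - u q) < eps) ->
  exists l, forall eps : R, 0 < eps ->
    exists N, forall p, (N <= p)%N -> normc (l - u p) < eps.
Proof.
move=> u_cauchy.
have ReB x y : complex.Re (x - y) = complex.Re x - complex.Re y by case: x; case: y.
have ImB x y : complex.Im (x - y) = complex.Im x - complex.Im y by case: x; case: y.
have /cauchy_seq_cvg[lre Hre] : forall eps : R, 0 < eps -> exists N, forall p q,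
    (N <= p)%N -> (N <= q)%N -> `|complex.Re (u p) - complex.Re (u q)| < eps.
  move=> eps /u_cauchy[N HN]; exists N => p q hp hq.
  by rewrite -ReB; apply: le_lt_trans (Re_le_normc _) (HN p q hp hq).
have /cauchy_seq_cvg[lim Him] : forall eps : R, 0 < eps -> exists N, forall p q,
    (N <= p)%N -> (N <= q)%N -> `|complex.Im (u p) - complex.Im (u q)| < eps.
  move=> eps /u_cauchy[N HN]; exists N => p q hp hq.
  by rewrite -ImB; apply: le_lt_trans (Im_le_normc _) (HN p q hp hq).
exists (lre +i* lim)%C => eps eps0.
have eps2 : 0 < eps / 2 by rewrite divr_gt0.
have [N1 H1] := Hre _ eps2; have [N2 H2] := Him _ eps2.
exists (maxn N1 N2) => p; rewrite geq_max => /andP[/H1 h1 /H2 h2].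
apply: le_lt_trans (normc_le_ReIm _) _; rewrite ReB ImB /=; lra.
Qed.

End ComplexNorm.

Section L1Norm.
Variables (R : realType) (m : nat).
Local Notation normc := (@Normc.normc R).
Local Notation M := 'M[R[i]]_m.
Implicit Types X Y T : M.

Definition l1norm X : R := \sum_i \sum_j normc (X i j).

Lemma l1norm_ge0 X : 0 <= l1norm X.
Proof. by apply: sumr_ge0 => i _; apply: sumr_ge0 => j _; apply: normc_ge0. Qed.

Lemma l1norm_row X i : \sum_j normc (X i j) <= l1norm X.
Proof.
rewrite /l1norm [leRHS](bigD1 i) //= lerDl.
by apply: sumr_ge0 => k _; apply: sumr_ge0 => j _; apply: normc_ge0.
Qed.

Lemma l1norm_entry X i j : normc (X i j) <= l1norm X.
Proof.
apply: le_trans (l1norm_row X i); rewrite (bigD1 j) //= lerDl.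
by apply: sumr_ge0 => k _; apply: normc_ge0.
Qed.

Lemma l1normD X Y : l1norm (X + Y) <= l1norm X + l1norm Y.
Proof.
rewrite /l1norm -big_split; apply: ler_sum => i _.
by rewrite -big_split; apply: ler_sum => j _; rewrite mxE le_normcD.
Qed.

Lemma l1normZ (c : R[i]) X : l1norm (c *: X) = normc c * l1norm X.
Proof.
rewrite /l1norm mulr_sumr; apply: eq_bigr => i _; rewrite mulr_sumr.
by apply: eq_bigr => j _; rewrite mxE Normc.normcM.
Qed.

Lemma l1normN X : l1norm (- X) = l1norm X.
Proof. by rewrite -scaleN1r l1normZ normcN Normc.normc1 mul1r. Qed.

Lemma l1normB X Y : l1norm (X - Y) = l1norm (Y - X).
Proof. by rewrite -l1normN opprB. Qed.

Lemma l1norm0 : l1norm 0 = 0.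
Proof. by rewrite -(scale0r 0) l1normZ Normc.normc0 mul0r. Qed.

Lemma l1norm_sum (I : Type) (r : seq I) (P : pred I) (F : I -> M) :
  l1norm (\sum_(i <- r | P i) F i) <= \sum_(i <- r | P i) l1norm (F i).
Proof.
elim/big_rec2: _ => [|i y1 y2 _ IH]; first by rewrite l1norm0.
by apply: le_trans (l1normD _ _) _; rewrite lerD2l.
Qed.

Lemma l1normM X Y : l1norm (X * Y) <= l1norm X * l1norm Y.
Proof.
have -> : l1norm X * l1norm Y = \sum_i \sum_k normc (X i k) * l1norm Y.
  by rewrite mulr_suml; apply: eq_bigr => i _; rewrite mulr_suml.
apply: ler_sum => i _.
apply: le_trans (_ : _ <= \sum_k normc (X i k) * \sum_j normc (Y k j)) _; last first.
  by apply: ler_sum => k _; apply: ler_wpM2l; [exact: normc_ge0 | exact: l1norm_row].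
under [leRHS]eq_bigr => k _ do rewrite mulr_sumr.
rewrite exchange_big /=; apply: ler_sum => j _.
rewrite [X * Y]/(X *m Y) mxE; apply: le_trans (normc_sum _ _ _) _.
by apply: ler_sum => k _; rewrite Normc.normcM.
Qed.

Lemma l1norm1 : l1norm (1 : M) = m%:R.
Proof.
rewrite /l1norm (eq_bigr (fun _ => 1)) ?sumr_const ?card_ord // => i _.
rewrite (bigD1 i) //= big1 ?addr0 => [|j /negbTE ji]; rewrite mxE ?eqxx ?Normc.normc1 //.
by rewrite eq_sym ji Normc.normc0.
Qed.

Lemma l1normXS X p : l1norm (X ^+ p.+1) <= l1norm X ^+ p.+1.
Proof.
elim: p => [|p IH]; first by rewrite !expr1.
rewrite exprS [leRHS]exprS; apply: le_trans (l1normM _ _) _.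
exact: ler_pM (l1norm_ge0 _) (l1norm_ge0 _) (lexx _) IH.
Qed.

Lemma l1normX X p : l1norm (X ^+ p) <= m%:R * l1norm X ^+ p.
Proof.
elim: p => [|p IH]; first by rewrite expr0 l1norm1 mulr1.
rewrite exprSr [in leRHS]exprSr mulrA; apply: le_trans (l1normM _ _) _.
exact: ler_pM (l1norm_ge0 _) (l1norm_ge0 _) IH (lexx _).
Qed.

Lemma eq_of_l1norm_le (c : R) X Y : 0 <= c ->
  (forall e, 0 < e -> l1norm (X - Y) <= c * e) -> X = Y.
Proof.
move=> c0 H; apply/eqP; rewrite -subr_eq0; apply/eqP/matrixP => i j.
rewrite [RHS]mxE; apply: Normc.eq0_normc; apply/eqP; rewrite eq_le normc_ge0 andbT.
apply: (ler_addgt0_scaled c0) => e e0; rewrite add0r.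
exact: le_trans (l1norm_entry _ i j) (H e e0).
Qed.

Lemma frob_le_l1norm X : frob X <= l1norm X.
Proof.
rewrite /frob -(ger0_norm (l1norm_ge0 X)) -sqrtr_sqr ler_sqrt ?sqr_ge0 //.
rewrite expr2 {2}/l1norm mulr_sumr; apply: ler_sum => i _.
rewrite mulr_sumr; apply: ler_sum => j _.
rewrite -normc_sqr expr2; apply: ler_wpM2r; [exact: normc_ge0 | exact: l1norm_entry].
Qed.

Lemma normc_le_frob X i j : normc (X i j) <= frob X.
Proof.
have sqr_ge0 (z : R[i]) : 0 <= complex.Re z ^+ 2 + complex.Im z ^+ 2.
  by rewrite addr_ge0 ?sqr_ge0.
rewrite /frob -(ger0_norm (normc_ge0 (X i j))) -sqrtr_sqr ler_sqrt; last first.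
  by apply: sumr_ge0 => k _; apply: sumr_ge0 => l _; exact: sqr_ge0.
rewrite normc_sqr (bigD1 i) //= (bigD1 j) //= -addrA lerDl addr_ge0 //.
  by apply: sumr_ge0 => l _; exact: sqr_ge0.
by apply: sumr_ge0 => k _; apply: sumr_ge0 => l _; exact: sqr_ge0.
Qed.

Lemma l1norm_le_frob X : l1norm X <= (m * m)%:R * frob X.
Proof.
apply: le_trans (_ : _ <= \sum_(i < m) \sum_(j < m) frob X) _.
  by apply: ler_sum => i _; apply: ler_sum => j _; apply: normc_le_frob.
by rewrite !sumr_const !card_ord -mulrnA mulr_natl.
Qed.

Lemma mx_cauchy_cvg (u : nat -> M) :
  (forall eps : R, 0 < eps -> exists N, forall p q,
     (N <= p)%N -> (N <= q)%N -> l1norm (u p - u q) < eps) ->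
  exists L, forall eps : R, 0 < eps ->
    exists N, forall p, (N <= p)%N -> l1norm (L - u p) < eps.
Proof.
move=> u_cauchy.
have entry_cvg i j : exists l, forall eps : R, 0 < eps ->
    exists N, forall p, (N <= p)%N -> normc (l - u p i j) < eps.
  apply: complex_cauchy_cvg => eps /u_cauchy[N HN]; exists N => p q hp hq.
  apply: le_lt_trans (HN p q hp hq).
  by have := l1norm_entry (u p - u q) i j; rewrite !mxE.
have [l Hl] := fin_all_exists (fun i => fin_all_exists (entry_cvg i)).
exists (\matrix_(i, j) l i j) => eps eps0.
have mm0 : 0 <= (m * m)%:R :> R by [].
have e0 : 0 < eps / ((m * m)%:R + 1) by rewrite divr_gt0 // ltr_wpDl.
have [N HN] := fin_all_exists (fun i => fin_all_exists (fun j => Hl i j _ e0)).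
exists (\max_i \max_j N i j)%N => p hp.
apply: le_lt_trans (ltr_mul_div_succ mm0 eps0).
apply: le_trans (_ : _ <= \sum_(i < m) \sum_(j < m) eps / ((m * m)%:R + 1)) _; last first.
  by rewrite !sumr_const !card_ord -mulrnA mulr_natl.
apply: ler_sum => i _; apply: ler_sum => j _; rewrite !mxE; apply/ltW/HN.
apply: leq_trans hp; apply: leq_trans (leq_bigmax (F := fun i => \max_j N i j)%N i).
exact: (leq_bigmax (F := fun j => N i j)).
Qed.

Lemma unitmx_1D T : l1norm T < 1 -> 1 + T \in unitmx.
Proof.
move=> T1; rewrite -row_free_unit -kermx_eq0; apply/eqP.
set K := kermx (1 + T).
have KT : K = - (K * T).
  apply/eqP; rewrite -addr_eq0; apply/eqP.
  by rewrite -[K in K + _]mulr1 -mulrDr; exact: mulmx_ker.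
have K_le0 : l1norm K <= 0.
  have : l1norm K <= l1norm K * l1norm T by rewrite {1}KT l1normN l1normM.
  have := l1norm_ge0 K; nra.
by apply: (@eq_of_l1norm_le 0) => // e _; rewrite subr0 mul0r.
Qed.

Lemma l1norm_invmx_1D T : l1norm T < 1 ->
  (1 - l1norm T) * l1norm (invmx (1 + T)) <= m%:R.
Proof.
move=> T1; set Si := invmx (1 + T).
have SiE : Si + T * Si = 1.
  by rewrite -{1}(mul1r Si) -mulrDl; exact: mulmxV (unitmx_1D T1).
have : l1norm Si <= m%:R + l1norm T * l1norm Si.
  rewrite {1}(_ : Si = 1 - T * Si); last by rewrite -SiE addrK.
  apply: le_trans (l1normD _ _) _; rewrite l1normN l1norm1 lerD2l.
  exact: l1normM.
by rewrite mulrBl mul1r lerBlDr addrC.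
Qed.

End L1Norm.

Section CauchyProduct.
Variables (T : pzRingType) (x y : T) (c : nat -> T).
Hypothesis cxy : GRing.comm x y.
Hypothesis c_central : forall k z, GRing.comm (c k) z.
Hypothesis c_binomial : forall n i, (i <= n)%N -> c n *+ 'C(n, i) = c i * c (n - i).
Let term i j := c i * x ^+ i * (c j * y ^+ j).

Lemma coef_exprD n : c n * (x + y) ^+ n = \sum_(0 <= i < n.+1) term i (n - i).
Proof.
rewrite addrC exprDn_comm; last exact: commr_sym.
rewrite mulr_sumr big_mkord; apply: eq_bigr => [[i /= hi]] _.
rewrite /term mulrnAr -mulrnAl c_binomial // (commrX i (commr_sym (commrX (n - i) cxy))).
by rewrite !mulrA -[c i * c (n - i) * x ^+ i]mulrA (c_central (n - i) (x ^+ i)) mulrA.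
Qed.

Lemma sum_coef_exprD N : \sum_(0 <= k < N) c k * (x + y) ^+ k =
  \sum_(0 <= i < N) \sum_(0 <= j < N - i) term i j.
Proof.
elim: N => [|N IH]; first by rewrite !big_geq.
rewrite big_nat_recr //= IH coef_exprD.
rewrite [in RHS](@eq_big_nat _ _ _ 0 N.+1 _
  (fun i => \sum_(0 <= j < N - i) term i j + term i (N - i))); last first.
  by move=> i /andP[_ iN]; rewrite subSn // big_nat_recr.
rewrite big_split /= [X in _ = X + _]big_nat_recr //= subnn.
by rewrite [X in _ = _ + X + _]big_geq // addr0.
Qed.

Lemma mul_sum_coef_exprB N :
  (\sum_(0 <= i < N) c i * x ^+ i) * (\sum_(0 <= j < N) c j * y ^+ j)
  - \sum_(0 <= k < N) c k * (x + y) ^+ k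
  = \sum_(0 <= i < N) \sum_(N - i <= j < N) term i j.
Proof.
rewrite sum_coef_exprD big_distrl /= -sumrB; apply: eq_big_nat => i _.
rewrite big_distrr /= (big_cat_nat (leq0n (N - i)) (leq_subr i N)) /=.
by rewrite addrAC subrr add0r.
Qed.

End CauchyProduct.

Lemma invfact_binomial (F : numFieldType) n i : (i <= n)%N ->
  (n`!%:R)^-1 *+ 'C(n, i) = (i`!%:R)^-1 * ((n - i)`!%:R)^-1 :> F.
Proof.
move=> hi; rewrite -(mulr_natr _ 'C(n, i)) -(bin_fact hi) !natrM !invfM mulrAC.
rewrite mulVf ?mul1r //.
by rewrite pnatr_eq0 -lt0n bin_gt0.
Qed.

Section MatrixExponential.
Variables (R : realType) (m : nat).
Local Notation normc := (@Normc.normc R).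
Local Notation M := 'M[R[i]]_m.
Local Notation l1norm := (@l1norm R m).
Local Notation PS := (@expm_partial R m).
Local Notation mR := (m%:R : R).
Implicit Types X Y U V S : M.

(* [scalemxAl] and [scalemxAr] stated with the ring product, so that they rewrite. *)
Lemma scalemxAl_mul (c : R[i]) X Y : c *: (X * Y) = c *: X * Y.
Proof. exact: scalemxAl. Qed.

Lemma scalemxAr_mul (c : R[i]) X Y : c *: (X * Y) = X * (c *: Y).
Proof. exact: scalemxAr. Qed.

Lemma expm_partialE X N : PS X N = \sum_(0 <= k < N) (k`!%:R)^-1 *: X ^+ k.
Proof. by rewrite /expm_partial big_mkord. Qed.

Lemma normc_invfact k : normc (k`!%:R)^-1 = (k`!%:R)^-1.
Proof. by rewrite Normc.normcV normc_nat. Qed.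

Lemma l1norm_exp_term X k :
  l1norm ((k`!%:R)^-1 *: X ^+ k) <= mR * ((k`!%:R)^-1 * l1norm X ^+ k).
Proof.
rewrite l1normZ normc_invfact mulrCA.
by apply: ler_wpM2l; [rewrite invr_ge0 | exact: l1normX].
Qed.

Lemma l1norm_expm_partialB X N N' : (N <= N')%N ->
  l1norm (PS X N' - PS X N) <=
  mR * (series (exp_coeff (l1norm X)) N' - series (exp_coeff (l1norm X)) N).
Proof.
move=> NN'; rewrite !expm_partialE /series /= !exp_coeffE /=.
rewrite (big_cat_nat (leq0n N) NN') [X in _ * (X - _)](big_cat_nat (leq0n N) NN') /=.
rewrite !(addrAC _ _ (- _)) !subrr !add0r mulr_sumr; apply: le_trans (l1norm_sum _ _ _) _.
by apply: ler_sum => k _; exact: l1norm_exp_term.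
Qed.

Lemma l1norm_expm_partial X N : l1norm (PS X N) <= mR * expR (l1norm X).
Proof.
rewrite expm_partialE; apply: le_trans (l1norm_sum _ _ _) _.
apply: le_trans (_ : _ <= mR * series (exp_coeff (l1norm X)) N) _.
  rewrite /series /= exp_coeffE /= mulr_sumr.
  by apply: ler_sum => k _; exact: l1norm_exp_term.
by apply: ler_wpM2l => //; exact: series_exp_coeff_le (l1norm_ge0 _).
Qed.

Lemma expm_partial_cauchy X (eps : R) : 0 < eps -> exists N, forall p q,
  (N <= p)%N -> (N <= q)%N -> l1norm (PS X p - PS X q) < eps.
Proof.
move=> eps0; have m0 : 0 <= mR by [].
have [N HN] := series_exp_coeff_cvg (l1norm X) (divr_gt0 eps0 (ltr_wpDl m0 ltr01)).
suff le_case : forall p q, (N <= q <= p)%N -> l1norm (PS X p - PS X q) < eps.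
  exists N => p q hp hq; case: (leqP q p) => [qp | /ltnW pq].
    by apply: le_case; rewrite hq.
  by rewrite l1normB; apply: le_case; rewrite hp.
move=> p q /andP[hq qp]; apply: le_lt_trans (l1norm_expm_partialB X qp) _.
apply: le_lt_trans (ltr_mul_div_succ m0 eps0); apply: ler_wpM2l => //.
apply/ltW/(le_lt_trans _ (HN q hq)); rewrite lerD2r.
exact: series_exp_coeff_le (l1norm_ge0 _).
Qed.

Lemma is_expm_expm X : is_expm X (expm X).
Proof.
apply: (xgetPex 0); have [L HL] := mx_cauchy_cvg (expm_partial_cauchy X).
by exists L => eps /HL[N HN]; exists N => N' /HN; apply: le_lt_trans (frob_le_l1norm _).
Qed.

Lemma expm_cvg X (eps : R) : 0 < eps ->
  exists N0, forall N, (N0 <= N)%N -> l1norm (expm X - PS X N) < eps.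
Proof.
move=> eps0; have mm0 : 0 <= (m * m)%:R :> R by [].
have [N0 HN0] := is_expm_expm X (divr_gt0 eps0 (ltr_wpDl mm0 ltr01)).
exists N0 => N /HN0 h; apply: le_lt_trans (l1norm_le_frob _) _.
by apply: le_lt_trans (ltr_mul_div_succ mm0 eps0); apply: ler_wpM2l => //; apply: ltW.
Qed.

Lemma l1norm_expm X : l1norm (expm X) <= mR * expR (l1norm X).
Proof.
apply: (@ler_addgt0_scaled _ 1) => // e /(expm_cvg X)[N HN].
rewrite -(subrK (PS X N) (expm X)) mul1r [_ + e]addrC.
exact: le_trans (l1normD _ _) (lerD (ltW (HN _ (leqnn _))) (l1norm_expm_partial _ _)).
Qed.

Lemma expm_intertwine X Y S : X * S = S * Y -> expm X * S = S * expm Y.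
Proof.
move=> XS; apply: (@eq_of_l1norm_le _ _ (l1norm S + l1norm S)) => [|e e0].
  by rewrite addr_ge0 ?l1norm_ge0.
have [N1 H1] := expm_cvg X e0; have [N2 H2] := expm_cvg Y e0.
pose N := maxn N1 N2.
have PS_XS : PS X N * S = S * PS Y N.
  rewrite /expm_partial mulr_suml mulr_sumr; apply: eq_bigr => k _.
  by rewrite -scalemxAl_mul (intertwineX k XS) scalemxAr_mul.
have -> : expm X * S - S * expm Y = (expm X - PS X N) * S + S * (PS Y N - expm Y).
  by rewrite mulrBl mulrBr PS_XS addrA subrK.
rewrite [in leRHS]mulrDl; apply: le_trans (l1normD _ _) _; apply: lerD.
  apply: le_trans (l1normM _ _) _; rewrite [leRHS]mulrC.
  by apply: ler_wpM2r; [exact: l1norm_ge0 | exact/ltW/H1/leq_maxl].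
apply: le_trans (l1normM _ _) _; rewrite l1normB.
by apply: ler_wpM2l; [exact: l1norm_ge0 | exact/ltW/H2/leq_maxr].
Qed.

Lemma expm0 : expm (0 : M) = 1.
Proof.
apply: (@eq_of_l1norm_le _ _ 1) => // e /(expm_cvg 0)[N HN].
have <- : PS 0 N.+1 = 1.
  rewrite expm_partialE big_nat_recl // big1 => [|k _]; last first.
    by rewrite exprS mul0r scaler0.
  by rewrite expr0 fact0 invr1 scale1r addr0.
by rewrite mul1r ltW // HN.
Qed.

Lemma l1norm_expm_partial_mulB X Y N : X * Y = Y * X ->
  l1norm (PS X N * PS Y N - PS (X + Y) N) <=
  mR ^+ 2 * (series (exp_coeff (l1norm X)) N * series (exp_coeff (l1norm Y)) N
             - series (exp_coeff (l1norm X + l1norm Y)) N).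
Proof.
move=> XY; pose c k : M := ((k`!%:R)^-1 : R[i])%:M.
have cE k Z : c k * Z = (k`!%:R)^-1 *: Z := mul_scalar_mx _ _.
have PSc Z : PS Z N = \sum_(0 <= k < N) c k * Z ^+ k.
  by rewrite expm_partialE; apply: eq_bigr => k _; rewrite cE.
have c_central k Z : GRing.comm (c k) Z by exact/esym/scalar_mxC.
have c_binomial n i : (i <= n)%N -> c n *+ 'C(n, i) = c i * c (n - i)%N.
  by move=> ni; rewrite /c -raddfMn invfact_binomial //; exact: scalar_mxM.
rewrite !PSc (mul_sum_coef_exprB XY c_central c_binomial).
rewrite /series /= !exp_coeffE /= (mul_sum_coef_exprB (mulrC (l1norm X) (l1norm Y))
  (fun k z => mulrC ((k`!%:R)^-1) z) (@invfact_binomial R)).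
rewrite mulr_sumr; apply: le_trans (l1norm_sum _ _ _) _; apply: ler_sum => i _.
rewrite mulr_sumr; apply: le_trans (l1norm_sum _ _ _) _; apply: ler_sum => j _.
rewrite !cE; apply: le_trans (l1normM _ _) _.
apply: le_trans (ler_pM (l1norm_ge0 _) (l1norm_ge0 _)
  (l1norm_exp_term X i) (l1norm_exp_term Y j)) _.
by rewrite mulrACA -expr2.
Qed.

Lemma expm_add X Y : X * Y = Y * X -> expm (X + Y) = expm X * expm Y.
Proof.
move=> XY; apply: esym.
apply: (@eq_of_l1norm_le _ _ (l1norm (expm Y) + mR * expR (l1norm X) + mR ^+ 2 + 1)).
  by rewrite !addr_ge0 ?mulr_ge0 ?l1norm_ge0 ?expR_ge0 ?exprn_ge0.
move=> e e0.
have [N1 H1] := expm_cvg X e0; have [N2 H2] := expm_cvg Y e0.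
have [N3 H3] := expm_cvg (X + Y) e0.
have [N4 H4] := series_exp_coeff_cvg (l1norm X + l1norm Y) e0.
pose N := maxn (maxn N1 N2) (maxn N3 N4).
have [hN1 hN2 hN3 hN4] : [/\ (N1 <= N)%N, (N2 <= N)%N, (N3 <= N)%N & (N4 <= N)%N].
  by rewrite !leq_max !leqnn !orbT.
have -> : expm X * expm Y - expm (X + Y) =
    (expm X - PS X N) * expm Y + PS X N * (expm Y - PS Y N)
    + (PS X N * PS Y N - PS (X + Y) N) + (PS (X + Y) N - expm (X + Y)).
  by rewrite mulrBl mulrBr !addrA !subrK.
have b1 : l1norm ((expm X - PS X N) * expm Y) <= l1norm (expm Y) * e.
  apply: le_trans (l1normM _ _) _; rewrite mulrC.
  by apply: ler_wpM2l; [exact: l1norm_ge0 | exact/ltW/H1].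
have b2 : l1norm (PS X N * (expm Y - PS Y N)) <= mR * expR (l1norm X) * e.
  apply: le_trans (l1normM _ _) _.
  exact: ler_pM (l1norm_ge0 _) (l1norm_ge0 _) (l1norm_expm_partial _ _) (ltW (H2 _ hN2)).
have b3 : l1norm (PS X N * PS Y N - PS (X + Y) N) <= mR ^+ 2 * e.
  apply: le_trans (l1norm_expm_partial_mulB N XY) _.
  apply: ler_wpM2l; first by rewrite exprn_ge0.
  apply: ltW; apply: le_lt_trans (H4 _ hN4); rewrite lerD2r expRD.
  by apply: ler_pM; rewrite ?series_exp_coeff_ge0 ?series_exp_coeff_le ?l1norm_ge0.
have b4 : l1norm (PS (X + Y) N - expm (X + Y)) <= e by rewrite l1normB ltW ?H3.
rewrite !(mulrDl _ _ e) mul1r.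
apply: le_trans (l1normD _ _) (lerD _ b4); apply: le_trans (l1normD _ _) (lerD _ b3).
exact: le_trans (l1normD _ _) (lerD b1 b2).
Qed.

Lemma expm_natmul j X : expm (j%:R *: X) = expm X ^+ j.
Proof.
elim: j => [|j IH]; first by rewrite scale0r expm0 expr0.
rewrite -natr1 scalerDl scale1r expm_add ?IH ?exprSr //.
by rewrite -scalemxAl_mul -scalemxAr_mul.
Qed.

Lemma l1norm_exprSB U V (rho d : R) p :
  l1norm U <= rho -> l1norm V <= rho -> l1norm (U - V) <= d ->
  l1norm (U ^+ p.+1 - V ^+ p.+1) <= p.+1%:R * rho ^+ p * d.
Proof.
move=> hU hV hd; have rho0 := le_trans (l1norm_ge0 _) hU.
elim: p => [|p IH]; first by rewrite !expr1 expr0 mulr1 mul1r.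
have -> : U ^+ p.+2 - V ^+ p.+2 = U * (U ^+ p.+1 - V ^+ p.+1) + (U - V) * V ^+ p.+1.
  by rewrite mulrBr mulrBl addrA subrK -!exprS.
have hVp : l1norm (V ^+ p.+1) <= rho ^+ p.+1.
  by apply: le_trans (l1normXS _ _) _; rewrite lerXn2r ?nnegrE ?l1norm_ge0.
have h1 : l1norm (U * (U ^+ p.+1 - V ^+ p.+1)) <= rho * (p.+1%:R * rho ^+ p * d).
  exact: le_trans (l1normM _ _) (ler_pM (l1norm_ge0 _) (l1norm_ge0 _) hU IH).
have h2 : l1norm ((U - V) * V ^+ p.+1) <= d * rho ^+ p.+1.
  exact: le_trans (l1normM _ _) (ler_pM (l1norm_ge0 _) (l1norm_ge0 _) hd hVp).
apply: le_trans (l1normD _ _) (le_trans (lerD h1 h2) _).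
rewrite [leRHS](_ : _ = rho * (p.+1%:R * rho ^+ p * d) + d * rho ^+ p.+1) //.
by rewrite -[p.+2]addn1 natrD exprS; ring.
Qed.

Lemma expm_lipschitz U V (rho : R) : l1norm U <= rho -> l1norm V <= rho ->
  l1norm (expm U - expm V) <= expR rho * l1norm (U - V).
Proof.
move=> hU hV; set d := l1norm (U - V).
have partialB N : l1norm (PS U N.+1 - PS V N.+1) <= expR rho * d.
  rewrite !expm_partialE -sumrB big_nat_recl // !expr0 subrr add0r.
  apply: le_trans (l1norm_sum _ _ _) _.
  apply: le_trans (_ : _ <= \sum_(0 <= i < N) exp_coeff rho i * d) _.
    apply: ler_sum => i _; rewrite -scalerBr l1normZ normc_invfact.
    apply: le_trans (ler_wpM2l _ (l1norm_exprSB i hU hV (lexx d))) _.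
      by rewrite invr_ge0.
    rewrite exp_coeffE /= factS natrM invfM mulrAC !mulrA mulVf ?pnatr_eq0 //.
    by rewrite mul1r mulrC mulrA.
  rewrite -mulr_suml; apply: ler_wpM2r; first exact: l1norm_ge0.
  exact: series_exp_coeff_le (le_trans (l1norm_ge0 _) hU).
apply: (@ler_addgt0_scaled _ 2) => // e e0.
have [N1 H1] := expm_cvg U e0; have [N2 H2] := expm_cvg V e0.
pose N := (maxn N1 N2).+1.
have -> : expm U - expm V = (expm U - PS U N) + (PS U N - PS V N) + (PS V N - expm V).
  by rewrite !addrA !subrK.
have h1 : l1norm (expm U - PS U N) <= e by apply/ltW/H1; rewrite leqW ?leq_maxl.
have h3 : l1norm (PS V N - expm V) <= e.
  by rewrite l1normB; apply/ltW/H2; rewrite leqW ?leq_maxr.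
apply: le_trans (l1normD _ _) _; apply: le_trans (lerD (l1normD _ _) (lexx _)) _.
apply: le_trans (lerD (lerD h1 (partialB (maxn N1 N2))) h3) _.
by rewrite mulr_natl mulr2n addrAC addrC.
Qed.

Lemma expm_conj X S Si : S * Si = 1 -> Si * S = 1 ->
  expm (Si * X * S) = Si * expm X * S.
Proof.
move=> SSi SiS; have XS : X * S = S * (Si * X * S) by rewrite !mulrA SSi mul1r.
by rewrite -[RHS]mulrA (expm_intertwine XS) mulrA SiS mul1r.
Qed.

Lemma expm_periodic (k n : nat) X W : X * W = W * X -> expm X ^+ k = 1 ->
  expm (n%:R *: X + W) = expm ((n %% k)%:R *: X + W).
Proof.
move=> XW Xk; rewrite {1}(divn_eq n k) natrD scalerDl -addrA expm_add.
  by rewrite expm_natmul mulnC exprM Xk expr1n mul1r.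
rewrite mulrDr mulrDl -!scalemxAl_mul -!scalemxAr_mul !scalerA XW.
by rewrite [(n %% k)%:R * _]mulrC.
Qed.

End MatrixExponential.

Section SmallPerturbations.
Variables (R : realType) (m : nat).
Local Notation M := 'M[R[i]]_m.
Local Notation l1norm := (@l1norm R m).
Local Notation normc := (@Normc.normc R).
Implicit Types (F G : M -> M) (Q : M -> Prop).

Definition near0 Q := exists2 d : R, 0 < d & forall B, l1norm B <= d -> Q B.
Definition bounded0 F := exists c : R, near0 (fun B => l1norm (F B) <= c).
Definition bigO1 F := exists c : R, near0 (fun B => l1norm (F B) <= c * l1norm B).
Definition bigO2 F := exists c : R, near0 (fun B => l1norm (F B) <= c * l1norm B ^+ 2).

Lemma near0T Q : (forall B, Q B) -> near0 Q.
Proof. by move=> HQ; exists 1 => // B _; exact: HQ. Qed.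

Lemma near0_le (e : R) : 0 < e -> near0 (fun B => l1norm B <= e).
Proof. by move=> e0; exists e. Qed.

Lemma near0_and Q1 Q2 : near0 Q1 -> near0 Q2 -> near0 (fun B => Q1 B /\ Q2 B).
Proof.
move=> [d1 d1_gt0 H1] [d2 d2_gt0 H2]; exists (Num.min d1 d2).
  by rewrite lt_min d1_gt0.
by move=> B; rewrite le_min => /andP[/H1 ? /H2 ?].
Qed.

Lemma near0W Q1 Q2 : (forall B, Q1 B -> Q2 B) -> near0 Q1 -> near0 Q2.
Proof. by move=> H [d d0 HQ]; exists d => // B /HQ/H. Qed.

Lemma bounded0_cst X : bounded0 (fun=> X).
Proof. by exists (l1norm X); apply: near0T. Qed.

Lemma bounded0D F G : bounded0 F -> bounded0 G -> bounded0 (fun B => F B + G B).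
Proof.
move=> [c1 H1] [c2 H2]; exists (c1 + c2); apply: near0W (near0_and H1 H2) => B [h1 h2].
exact: le_trans (l1normD _ _) (lerD h1 h2).
Qed.

Lemma bigO1_bounded0 F : bigO1 F -> bounded0 F.
Proof.
move=> [c H]; exists `|c|; apply: near0W (near0_and H (near0_le ltr01)) => B [h hB].
by apply: le_trans h _; rewrite -[leRHS]mulr1 ler_mul_norml ?l1norm_ge0.
Qed.

Lemma bigO2_bounded0 F : bigO2 F -> bounded0 F.
Proof.
move=> [c H]; exists `|c|; apply: near0W (near0_and H (near0_le ltr01)) => B [h hB].
apply: le_trans h _; rewrite -[leRHS]mulr1 ler_mul_norml ?exprn_ge0 ?l1norm_ge0 //.
by rewrite exprn_ile1 ?l1norm_ge0.
Qed.

Lemma bounded0_bigO2B F G : bounded0 G -> bigO2 (fun B => F B - G B) -> bounded0 F.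
Proof.
move=> /bounded0D GF /bigO2_bounded0 /GF [c H]; exists c; apply: near0W H => B.
by rewrite addrC subrK.
Qed.

Lemma bigO1_le F (e : R) : bigO1 F -> 0 < e -> near0 (fun B => l1norm (F B) <= e).
Proof.
move=> [c H] e0; have c0 : 0 <= `|c| := normr_ge0 c.
apply: near0W (near0_and H (near0_le (divr_gt0 e0 (ltr_wpDl c0 ltr01)))) => B [h hB].
apply: le_trans h (le_trans (ler_mul_norml _ (l1norm_ge0 _) hB) (ltW _)).
exact: ltr_mul_div_succ.
Qed.

Lemma bigO1_sandwich X Y : bigO1 (fun B => X * B * Y).
Proof.
exists (l1norm X * l1norm Y); apply: near0T => B.
apply: le_trans (l1normM _ _) _; rewrite mulrAC.
by apply: ler_wpM2r; [exact: l1norm_ge0 | exact: l1normM].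
Qed.

Lemma bigO1Z (c : R[i]) F : bigO1 F -> bigO1 (fun B => c *: F B).
Proof.
move=> [c' H]; exists (normc c * c'); apply: near0W H => B h.
by rewrite l1normZ -mulrA; apply: ler_wpM2l => //; exact: normc_ge0.
Qed.

Lemma bigO1_sum (I : Type) (r : seq I) (P : pred I) (F : I -> M -> M) :
  (forall i, bigO1 (F i)) -> bigO1 (fun B => \sum_(i <- r | P i) F i B).
Proof.
move=> HF; elim: r => [|i r [c IH]].
  by exists 0; apply: near0T => B; rewrite big_nil l1norm0 mul0r.
have [Pi|nPi] := boolP (P i); last first.
  by exists c; apply: near0W IH => B; rewrite big_cons (negbTE nPi).
have [c' Hi] := HF i; exists (c' + c); apply: near0W (near0_and Hi IH) => B [h1 h2].
by rewrite big_cons Pi mulrDl; exact: le_trans (l1normD _ _) (lerD h1 h2).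
Qed.

Lemma bigO1M F G : bigO1 F -> bigO1 G -> bigO2 (fun B => F B * G B).
Proof.
move=> [c1 H1] [c2 H2]; exists (c1 * c2); apply: near0W (near0_and H1 H2) => B [h1 h2].
apply: le_trans (l1normM _ _) _; rewrite expr2 mulrACA.
exact: ler_pM (l1norm_ge0 _) (l1norm_ge0 _) h1 h2.
Qed.

Lemma bigO2D F G : bigO2 F -> bigO2 G -> bigO2 (fun B => F B + G B).
Proof.
move=> [c1 H1] [c2 H2]; exists (c1 + c2); apply: near0W (near0_and H1 H2) => B [h1 h2].
by rewrite mulrDl; exact: le_trans (l1normD _ _) (lerD h1 h2).
Qed.

Lemma bigO2N F : bigO2 F -> bigO2 (fun B => - F B).
Proof. by move=> [c H]; exists c; apply: near0W H => B; rewrite l1normN. Qed.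

Lemma bigO2Z (c : R[i]) F : bigO2 F -> bigO2 (fun B => c *: F B).
Proof.
move=> [c' H]; exists (normc c * c'); apply: near0W H => B h.
by rewrite l1normZ -mulrA; apply: ler_wpM2l => //; exact: normc_ge0.
Qed.

Lemma bigO2Ml F G : bounded0 F -> bigO2 G -> bigO2 (fun B => F B * G B).
Proof.
move=> [c1 H1] [c2 H2]; exists (c1 * c2); apply: near0W (near0_and H1 H2) => B [h1 h2].
apply: le_trans (l1normM _ _) _; rewrite -mulrA.
exact: ler_pM (l1norm_ge0 _) (l1norm_ge0 _) h1 h2.
Qed.

Lemma bigO2Mr F G : bigO2 F -> bounded0 G -> bigO2 (fun B => F B * G B).
Proof.
move=> [c1 H1] [c2 H2]; exists (c1 * c2); apply: near0W (near0_and H1 H2) => B [h1 h2].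
apply: le_trans (l1normM _ _) _; rewrite mulrAC.
exact: ler_pM (l1norm_ge0 _) (l1norm_ge0 _) h1 h2.
Qed.

Lemma bigO2_eq F G : near0 (fun B => F B = G B) -> bigO2 F -> bigO2 G.
Proof.
by move=> FG [c H]; exists c; apply: near0W (near0_and FG H) => B [<-].
Qed.

Lemma bigO2_sym F G : bigO2 (fun B => F B - G B) -> bigO2 (fun B => G B - F B).
Proof. by move=> [c H]; exists c; apply: near0W H => B; rewrite l1normB. Qed.

Lemma bounded0_expm F : bounded0 F -> bounded0 (fun B => expm (F B)).
Proof.
move=> [c H]; exists (m%:R * expR c); apply: near0W H => B h.
apply: le_trans (l1norm_expm _) _.
by apply: ler_wpM2l => //; rewrite ler_expR.
Qed.

Lemma bigO2_expm F G : bounded0 F -> bounded0 G -> bigO2 (fun B => F B - G B) ->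
  bigO2 (fun B => expm (F B) - expm (G B)).
Proof.
move=> [cF HF] [cG HG] [c H]; exists (expR (Num.max cF cG) * c).
apply: near0W (near0_and (near0_and HF HG) H) => B [[hF hG] h].
have hF' : l1norm (F B) <= Num.max cF cG by rewrite le_max hF.
have hG' : l1norm (G B) <= Num.max cF cG by rewrite le_max hG orbT.
rewrite -mulrA; apply: le_trans (expm_lipschitz hF' hG') _.
by apply: ler_wpM2l => //; exact: expR_ge0.
Qed.

Lemma bigO2_exprB n F G : bounded0 F -> bounded0 G -> bigO2 (fun B => F B - G B) ->
  bigO2 (fun B => F B ^+ n - G B ^+ n).
Proof.
case: n => [|p] [cF HF] [cG HG] [c H].
  by exists 0; apply: near0T => B; rewrite !expr0 subrr l1norm0 mul0r.
exists (p.+1%:R * Num.max cF cG ^+ p * c).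
apply: near0W (near0_and (near0_and HF HG) H) => B [[hF hG] h].
have hF' : l1norm (F B) <= Num.max cF cG by rewrite le_max hF.
have hG' : l1norm (G B) <= Num.max cF cG by rewrite le_max hG orbT.
by rewrite -(mulrA _ c); apply: l1norm_exprSB p hF' hG' h.
Qed.

Lemma bigO2_frob F : bigO2 F -> exists c : R, exists delta : R, 0 < c /\ 0 < delta /\
  forall B, frob B <= delta -> frob (F B) <= c * frob B ^+ 2.
Proof.
move=> [c [d d0 H]]; pose mm : R := (m * m)%:R; have mm0 : 0 <= mm by [].
exists (`|c| * mm ^+ 2 + 1), (d / (mm + 1)).
split; first by rewrite ltr_wpDl // mulr_ge0 ?exprn_ge0.
split; first by rewrite divr_gt0 // ltr_wpDl.
move=> B hB; have frob0 : 0 <= frob B by apply: sqrtr_ge0.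
have hBm : l1norm B <= mm * frob B := l1norm_le_frob B.
apply: le_trans (frob_le_l1norm _) _; apply: le_trans (H B _) _.
  apply: le_trans hBm (le_trans (ler_wpM2l mm0 hB) (ltW _)).
  exact: ltr_mul_div_succ.
apply: le_trans (ler_mul_norml _ (exprn_ge0 _ (l1norm_ge0 _)) _) _.
  by apply: lerXn2r hBm; rewrite ?nnegrE ?l1norm_ge0 ?mulr_ge0.
rewrite exprMn mulrA mulrDl mul1r lerDl.
by rewrite exprn_ge0.
Qed.

End SmallPerturbations.

Section SpectralPerturbation.
Variables (R : realType) (m s : nat) (a : 'I_s -> R[i]) (P : 'I_s -> 'M[R[i]]_m).
Hypothesis a_inj : injective a.
Hypothesis P_orth : forall i j, P i * P j = (if i == j then P i else 0).
Hypothesis P_sum : \sum_(j < s) P j = 1.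
Local Notation M := 'M[R[i]]_m.
Local Notation l1norm := (@l1norm R m).
Implicit Types B : M.

Let A : M := \sum_(j < s) a j *: P j.

Definition sylvester B : M :=
  \sum_j \sum_(l | l != j) (a l - a j)^-1 *: (P j * B * P l).

Lemma mulAP j : A * P j = a j *: P j.
Proof.
rewrite /A mulr_suml (bigD1 j) //= -scalemxAl_mul P_orth eqxx big1 ?addr0 //.
by move=> l lj; rewrite -scalemxAl_mul P_orth (negbTE lj) scaler0.
Qed.

Lemma mulPA j : P j * A = a j *: P j.
Proof.
rewrite /A mulr_sumr (bigD1 j) //= -scalemxAr_mul P_orth eqxx big1 ?addr0 //.
by move=> l lj; rewrite -scalemxAr_mul P_orth eq_sym (negbTE lj) scaler0.
Qed.

Lemma mulA_PBP j l B : A * (P j * B * P l) = a j *: (P j * B * P l).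
Proof. by rewrite !mulrA mulAP -!scalemxAl_mul. Qed.

Lemma mulPBP_A j l B : P j * B * P l * A = a l *: (P j * B * P l).
Proof. by rewrite -mulrA mulPA -scalemxAr_mul. Qed.

Lemma ssp_add_sspc B : ssp P B + sspc P B = B.
Proof.
have BE : B = (\sum_j P j) * B * (\sum_l P l) by rewrite P_sum mul1r mulr1.
rewrite [RHS]BE !mulr_suml /ssp /sspc -big_split; apply: eq_bigr => j _ /=.
by rewrite mulr_sumr [RHS](bigD1 j).
Qed.

Lemma commr_ssp B : A * ssp P B = ssp P B * A.
Proof.
rewrite /ssp mulr_sumr mulr_suml; apply: eq_bigr => j _.
by rewrite mulA_PBP mulPBP_A.
Qed.

Lemma sylvester_commutator B : A * sylvester B - sylvester B * A = - sspc P B.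
Proof.
rewrite /sylvester /sspc mulr_sumr mulr_suml -sumrB -sumrN; apply: eq_bigr => j _.
rewrite mulr_sumr mulr_suml -sumrB -sumrN; apply: eq_bigr => l lj.
rewrite -scalemxAr_mul -scalemxAl_mul mulA_PBP mulPBP_A !scalerA -scalerBl -mulrBr.
have alj : a l - a j != 0 by rewrite subr_eq0; apply: contra lj => /eqP /a_inj ->.
by rewrite -[a j - a l]opprB mulrN mulVf // scaleN1r.
Qed.

Lemma bigO1_ssp : bigO1 (ssp P).
Proof. by apply: bigO1_sum => j; exact: bigO1_sandwich. Qed.

Lemma bigO1_sspc : bigO1 (sspc P).
Proof. by apply: bigO1_sum => j; apply: bigO1_sum => l; exact: bigO1_sandwich. Qed.

Lemma bigO1_sylvester : bigO1 sylvester.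
Proof.
apply: bigO1_sum => j; apply: bigO1_sum => l.
by apply: bigO1Z; exact: bigO1_sandwich.
Qed.

(* [Y r n B] is the exponent on the right of the theorem, with [Y 1 1 B = A + B];
   [Z r n B] is its part commuting with [A] and [C r n B] its conjugate by [S B]. *)
Let S B : M := 1 + sylvester B.
Let Si B : M := invmx (S B).
Let Y (r n : R[i]) B : M := r *: A + r *: sspc P B + n *: ssp P B.
Let Z (r n : R[i]) B : M := r *: A + n *: ssp P B.
Let C (r n : R[i]) B : M := Si B * Y r n B * S B.

Lemma conj_perturbation_identity (r n : R[i]) B :
  Y r n B * S B - S B * Z r n B = r *: (sspc P B * sylvester B)
    + n *: (ssp P B * sylvester B - sylvester B * ssp P B).
Proof.
have AT : A * sylvester B = sylvester B * A - sspc P B.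
  by rewrite -[A * _](subrK (sylvester B * A)) sylvester_commutator addrC.
rewrite /Y /Z /S !mulrDr !mulrDl !mulr1 !mul1r -!scalemxAl_mul -!scalemxAr_mul AT.
(* What remains is an additive identity between these products, checked entrywise. *)
move: (sylvester B * A) (sspc P B * sylvester B) (ssp P B * sylvester B)
  (sylvester B * ssp P B) => TA OT WT TW.
by apply/matrixP => i j; rewrite !mxE; ring.
Qed.

Let half_lt1 : (2^-1 : R) < 1. Proof. by rewrite invf_lt1 ?ltr1n. Qed.

Lemma near0_sylvester_half : near0 (fun B => l1norm (sylvester B) <= 2^-1).
Proof. by apply: bigO1_le bigO1_sylvester _; rewrite invr_gt0. Qed.

Lemma near0_S_unit : near0 (fun B => S B * Si B = 1 /\ Si B * S B = 1).
Proof.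
apply: near0W near0_sylvester_half => B T_half.
have Su : S B \in unitmx := unitmx_1D (le_lt_trans T_half half_lt1).
by split; [exact: mulmxV | exact: mulVmx].
Qed.

Lemma bounded0_S : bounded0 S.
Proof. exact: bounded0D (bounded0_cst _) (bigO1_bounded0 bigO1_sylvester). Qed.

Lemma bounded0_Si : bounded0 Si.
Proof.
exists (2 * m%:R); apply: near0W near0_sylvester_half => B T_half.
have h := l1norm_invmx_1D (le_lt_trans T_half half_lt1).
apply: le_trans (_ : _ <= 2 * ((1 - l1norm (sylvester B)) * l1norm (Si B))) _.
  by rewrite mulrA ler_peMl ?l1norm_ge0 //; lra.
by rewrite ler_pM2l.
Qed.

Lemma bigO2_conj_perturbation r n : bigO2 (fun B => C r n B - Z r n B).
Proof.
pose D B := r *: (sspc P B * sylvester B)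
  + n *: (ssp P B * sylvester B - sylvester B * ssp P B).
apply: (@bigO2_eq _ _ (fun B => Si B * D B)).
  apply: near0W near0_S_unit => B [_ SiS].
  by rewrite /D -conj_perturbation_identity mulrBr !mulrA SiS mul1r.
apply: bigO2Ml bounded0_Si _; apply: bigO2D; apply: bigO2Z.
  exact: bigO1M bigO1_sspc bigO1_sylvester.
apply: bigO2D (bigO1M bigO1_ssp bigO1_sylvester) _.
exact: bigO2N (bigO1M bigO1_sylvester bigO1_ssp).
Qed.

Lemma bounded0_Z r n : bounded0 (Z r n).
Proof. exact: bounded0D (bounded0_cst _) (bigO1_bounded0 (bigO1Z _ bigO1_ssp)). Qed.

Lemma bounded0_C r n : bounded0 (C r n).
Proof. exact: bounded0_bigO2B (bounded0_Z r n) (bigO2_conj_perturbation r n). Qed.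

Lemma bigO2_expm_pow (k n : nat) : expm A ^+ k = 1 ->
  bigO2 (fun B => expm (A + B) ^+ n - expm (Y (n %% k)%:R n%:R B)).
Proof.
move=> Ak; set r : R[i] := (n %% k)%:R.
have Zn B : expm (Z 1 1 B) ^+ n = expm (Z r n%:R B).
  rewrite -expm_natmul /Z !scale1r scalerDr (expm_periodic n _ Ak) //.
  by rewrite -scalemxAl_mul -scalemxAr_mul commr_ssp.
have AB B : A + B = Y 1 1 B.
  by rewrite /Y !scale1r -addrA [sspc P B + _]addrC ssp_add_sspc.
apply: (@bigO2_eq _ _ (fun B => S B * ((expm (C 1 1 B) ^+ n - expm (Z 1 1 B) ^+ n)
  + (expm (Z r n%:R B) - expm (C r n%:R B))) * Si B)).
  apply: near0W near0_S_unit => B [SSi SiS].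
  have EY r' n' : expm (Y r' n' B) = S B * expm (C r' n' B) * Si B.
    by rewrite /C (expm_conj _ SSi SiS) !mulrA SSi mul1r -mulrA SSi mulr1.
  by rewrite AB !EY; apply: conj_exprB.
apply: bigO2Mr _ bounded0_Si; apply: bigO2Ml bounded0_S _; apply: bigO2D.
  apply: bigO2_exprB.
  - exact: bounded0_expm (bounded0_C 1 1).
  - exact: bounded0_expm (bounded0_Z 1 1).
  - exact: bigO2_expm (bounded0_C 1 1) (bounded0_Z 1 1) (bigO2_conj_perturbation 1 1).
apply: bigO2_expm (bounded0_Z r n%:R) (bounded0_C r n%:R) _.
exact: bigO2_sym (bigO2_conj_perturbation r n%:R).
Qed.

End SpectralPerturbation.

Theorem theorem3 (R : realType) (m : nat)
  (A : 'M[R[i]]_m) (s : nat) (a : 'I_s -> R[i]) (P : 'I_s -> 'M[R[i]]_m)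
  (* spectral decomposition of the diagonalizable matrix A *)
  (ha_inj : injective a)
  (hP_nz : forall j, P j != 0)
  (hP_orth : forall i j, P i * P j = (if i == j then P i else 0))
  (hP_sum : \sum_(j < s) P j = 1)
  (hA : A = \sum_(j < s) a j *: P j)
  (* e^A has period k *)
  (k : nat) (hk_pos : (0 < k)%N) (hk : expm A ^+ k = 1)
  (hk_min : forall j : nat, (0 < j)%N -> (j < k)%N -> expm A ^+ j != 1)
  (n : nat) (hn : (0 < n)%N) :
  let r := (n %% k)%N in
  exists c : R, exists delta : R, 0 < c /\ 0 < delta /\
    forall B : 'M[R[i]]_m, frob B <= delta -> diagonalizable (A + B) ->
      frob (expm (A + B) ^+ n
            - expm (r%:R *: A + r%:R *: sspc P B + n%:R *: ssp P B))
      <= c * frob B ^+ 2.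
Proof.
move=> r; rewrite hA in hk *.
have [c [d [c0 [d0 H]]]] := bigO2_frob (bigO2_expm_pow ha_inj hP_orth hP_sum n hk).
by exists c, d; do 2!split => //; move=> B hB _; exact: H.
Qed.
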